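(* Let $U$ be a $\kappa$-cut that is not $(\mathrm{I},\kappa-1)$-small and has at least three sides. Then every other $\kappa$-cut $W$ either is a laminar cut of $U$ (i.e. $W\subseteq U\cup A$ for some side $A$ of $U$) or is itself $(\mathrm{I},\kappa-1)$-small.
   Context: $G=(V,E)$ is a finite, simple, connected, undirected, non-complete graph with $n=|V|$; $\kappa$ is its vertex connectivity, assumed to satisfy $\kappa<n/4$. A cut is a set $U\subset V$ whose removal disconnects $G$; a $\kappa$-cut is a cut of size $\kappa$. A side of a cut $U$ is a connected component of the subgraph induced on $V\setminus U$. A cut $U$ with sides $A_1,\dots,A_a$ is $(\mathrm{I},t)$-small if there is an index $i^\sharp$ with $\sum_{i\neq i^\sharp}|A_i|\le t$. A cut $W$ is a laminar cut of $U$ if $W\subseteq U\cup A$ for some side $A$ of $U$. *)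

From mathcomp Require Import all_boot.
Set Implicit Arguments. Unset Strict Implicit. Unset Printing Implicit Defensive.

Section Graph.
Variables (T : finType) (e : rel T).

Definition simple_graph := symmetric e /\ irreflexive e.
Definition graph_connected := forall x y : T, connect e x y.
Definition non_complete := exists x y : T, (x != y) && ~~ e x y.

Definition rem_rel (U : {set T}) : rel T :=
  fun x y => [&& e x y, x \notin U & y \notin U].

Definition is_cut (U : {set T}) : bool :=
  [exists x, exists y, [&& x \notin U, y \notin U & ~~ connect (rem_rel U) x y]].

(* the side (component of G[V\U]) containing x, for x \notin U *)
Definition side_of (U : {set T}) (x : T) : {set T} :=
  [set y | (y \notin U) && connect (rem_rel U) x y].

Definition sides (U : {set T}) : {set {set T}} :=
  [set side_of U x | x in ~: U].

(* vertex connectivity kappa: minimum size of a cut (G non-complete) *)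
Definition kappa : nat :=
  \big[minn/#|T|]_(U : {set T} | is_cut U) #|U|.

Definition small_I (U : {set T}) (t : nat) : Prop :=
  is_cut U /\
  exists2 A0, A0 \in sides U & \sum_(A in sides U | A != A0) #|A| <= t.

Definition laminar_cut (U W : {set T}) : Prop :=
  is_cut W /\ exists2 A, A \in sides U & W \subset U :|: A.

End Graph.

From mathcomp Require Import all_boot zify.
Set Implicit Arguments. Unset Strict Implicit. Unset Printing Implicit Defensive.

(* The argument is a corner count.  For x outside U and W, with A and B its
   sides for U and W, the corner set (W n A) u (U n W) u (U n B) separates
   the corner A n B from a vertex of W outside U u A, hence has size >= kappa.
   Comparing with |W| = |U| = kappa gives two corner inequalities
   |W \ (U u A)| <= |U n B|  and  |U \ (W u B)| <= |W n A|.
   From these: every W-side of such x meets U, every side of U meets W, two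
   vertices outside U u W lying in different sides of U must share their side
   of W (here the third side of U is used), and finally all vertices outside
   U u W lie in a single side B0 of W (here U not being small is used).  So the
   other sides of W are contained in U \ (W u B0), which misses the vertices of
   U n B0 and hence has at most kappa - 1 elements. *)

Section Sides.
Variables (T : finType) (e : rel T).
Implicit Types (U S B : {set T}) (x y z : T).

Lemma side_ofE U x y :
  (y \in side_of e U x) = (y \notin U) && connect (rem_rel e U) x y.
Proof. by rewrite inE. Qed.

Lemma side_self U x : x \notin U -> x \in side_of e U x.
Proof. by move=> xU; rewrite side_ofE xU connect0. Qed.

Lemma side_notin U x y : y \in side_of e U x -> y \notin U.
Proof. by rewrite side_ofE => /andP []. Qed.

Lemma side_disjoint U x : [disjoint U & side_of e U x].
Proof.
by rewrite disjoint_sym disjoints_subset; apply/subsetP => y /side_notin; rewrite inE.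
Qed.

Lemma side_step U x y z :
  y \in side_of e U x -> e y z -> z \notin U -> z \in side_of e U x.
Proof.
rewrite !side_ofE => /andP [yU xy] yz zU; rewrite zU.
by apply: connect_trans xy (connect1 _); rewrite /rem_rel yz yU zU.
Qed.

Lemma side_in_sides U x : x \notin U -> side_of e U x \in sides e U.
Proof. by move=> xU; apply: imset_f; rewrite inE. Qed.

Lemma sep_cut (S B : {set T}) x z :
  x \in B -> [disjoint B & S] ->
  (forall y y', y \in B -> e y y' -> (y' \in B) || (y' \in S)) ->
  z \notin B -> z \notin S -> is_cut e S.
Proof.
move=> xB BS closedB zB zS; have xS : x \notin S by rewrite (disjointFr BS xB).
apply/existsP; exists x; apply/existsP; exists z; rewrite xS zS /=.
apply/negP => /connectP [p xp zp].
suff : last x p \in B by rewrite -zp (negbTE zB).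
elim: p x xB {xS zp} xp => [|y p IH] x' x'B //= /andP [x'y yp].
apply: IH yp; move: x'y => /and3P [x'y _ yS].
by have := closedB _ _ x'B x'y; rewrite (negbTE yS) orbF.
Qed.

Lemma kappa_le S : is_cut e S -> kappa e <= #|S|.
Proof.
move=> cutS; rewrite /kappa; have := mem_index_enum S.
elim: (index_enum _) => [//|X r IH]; rewrite inE big_cons.
case/orP => [/eqP <-|Sr]; first by rewrite cutS geq_minl.
by case: ifP => _; rewrite ?geq_min IH ?orbT.
Qed.

Lemma not_small_sum U t A0 : is_cut e U -> ~ small_I e U t -> A0 \in sides e U ->
  t < \sum_(A in sides e U | A != A0) #|A|.
Proof.
move=> cutU nsmall A0U; rewrite ltnNge; apply/negP => le.
by apply: nsmall; split=> //; exists A0.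
Qed.

Hypothesis esym : symmetric e.

Lemma rem_connect_sym U : connect_sym (rem_rel e U).
Proof.
apply: sym_connect_sym => x y; rewrite /rem_rel esym.
by case: (x \in U); case: (y \in U); rewrite ?andbF.
Qed.

Lemma side_eq U x y : y \in side_of e U x -> side_of e U y = side_of e U x.
Proof.
rewrite side_ofE => /andP [_ xy]; apply/setP => z; rewrite !side_ofE.
case: (z \in U) => //=; apply/idP/idP => [|xz]; first exact: connect_trans.
by apply: connect_trans xz; rewrite rem_connect_sym.
Qed.

Lemma side_eq_common U x y z :
  z \in side_of e U x -> z \in side_of e U y -> side_of e U x = side_of e U y.
Proof. by move=> zx zy; rewrite -(side_eq zx) -(side_eq zy). Qed.

Lemma side_other U x y z :
  z \in side_of e U x -> side_of e U x != side_of e U y -> z \notin side_of e U y.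
Proof. by move=> zx; apply: contra => zy; rewrite (side_eq_common zx zy). Qed.

Lemma sides_trivI U : trivIset (sides e U).
Proof.
apply/trivIsetP => _ _ /imsetP [x _ ->] /imsetP [y _ ->] xy.
rewrite -setI_eq0; apply/set0Pn => [[z]]; rewrite inE => /andP [zx zy].
by rewrite (side_eq_common zx zy) eqxx in xy.
Qed.

Lemma not_cut_one_side U x :
  (forall y, y \notin U -> y \in side_of e U x) -> ~~ is_cut e U.
Proof.
move=> one; apply/existsP => [[y1 /existsP [y2 /and3P [y1U y2U]]]].
move: (one _ y1U) (one _ y2U); rewrite !side_ofE => /andP [_ xy1] /andP [_ xy2].
by rewrite (connect_trans _ xy2) // rem_connect_sym.
Qed.

Lemma other_side_sub U (Y : {set T}) y y' :
  side_of e U y != side_of e U y' ->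
  Y :&: side_of e U y \subset Y :\: (U :|: side_of e U y').
Proof.
move=> yy'; apply/subsetP => z; rewrite in_setI => /andP [zY zy].
by rewrite in_setD in_setU zY (negbTE (side_notin zy)) (side_other zy yy').
Qed.

Lemma third_side U (A1 A2 : {set T}) : 3 <= #|sides e U| ->
  exists2 x, x \notin U & (side_of e U x != A1) && (side_of e U x != A2).
Proof.
rewrite (cardsD1 A1) (cardsD1 A2 (sides e U :\ A1)) => three.
have : 0 < #|sides e U :\ A1 :\ A2|.
  by move: three; set n := #|_ :\ A2|; case: (_ \in _); case: (_ \in _); lia.
case/card_gt0P => A; rewrite !in_setD1.
move=> /and3P [A2A A1A /imsetP [x + eA]]; subst A.
by rewrite inE => xU; exists x; rewrite // A1A A2A.
Qed.

Lemma other_sides_sum_le U (Y : {set T}) x0 :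
  (forall z, z \notin U -> z \notin side_of e U x0 -> z \in Y) ->
  \sum_(A in sides e U | A != side_of e U x0) #|A|
    <= #|Y :\: (U :|: side_of e U x0)|.
Proof.
move=> inY; rewrite (eq_bigl [in sides e U :\ side_of e U x0]); last first.
  by move=> A; rewrite in_setD1 andbC.
have := trivIsetS (subD1set (sides e U) (side_of e U x0)) (sides_trivI U).
move/eqP => ->.
apply/subset_leq_card/subsetP => z /bigcupP [A + zA].
rewrite in_setD1 => /andP [Ax0 /imsetP [y _ eA]]; subst A.
have zx0 := side_other zA Ax0.
by rewrite in_setD in_setU negb_or (side_notin zA) zx0 inY ?(side_notin zA).
Qed.
End Sides.

Lemma card_split3 (T : finType) (X Y Z : {set T}) : [disjoint Y & Z] ->
  #|X :&: Y| + #|X :&: Z| + #|X :\: (Y :|: Z)| = #|X|.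
Proof.
move=> YZ; rewrite -(cardsID (Y :|: Z) X) setIUr; congr (_ + _).
apply/esym/eqP; rewrite (leq_card_setU _ _).2.
exact: disjointW (subsetIr _ _) (subsetIr _ _) YZ.
Qed.

Lemma outside_two (T : finType) (U W : {set T}) :
  #|U| + #|W| < #|T| -> exists x, x \notin U /\ x \notin W.
Proof.
move=> UWsmall; have : 0 < #|~: (U :|: W)|.
  by have := cardsC (U :|: W); have := (leq_card_setU U W).1; lia.
by case/card_gt0P => x; rewrite !inE negb_or => /andP []; exists x.
Qed.

(* Throughout, U and W are kappa-cuts of a graph with symmetric adjacency
   and W is not laminar to U: it leaves every side of U. *)
Section Crossing.
Variables (T : finType) (e : rel T) (U W : {set T}).
Hypothesis esym : symmetric e.
Hypotheses (HUk : #|U| = kappa e) (HWk : #|W| = kappa e).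
Hypothesis cross : forall x, x \notin U -> ~~ (W \subset U :|: side_of e U x).

Local Notation sideU := (side_of e U).
Local Notation sideW := (side_of e W).

Lemma cross_escape x : x \notin U -> exists w, w \in W :\: (U :|: sideU x).
Proof. by move=> /cross /subsetPn [w wW wUA]; exists w; rewrite in_setD wUA. Qed.

(* Corner inequality: for x outside U and W, the corner set
   (W n A) u (U n W) u (U n B) cuts A n B off a vertex of W outside U u A. *)
Lemma corner_ineq x : x \notin U -> x \notin W ->
  kappa e <= #|W :&: sideU x| + #|U :&: W| + #|U :&: sideW x|.
Proof.
move=> xU xW; have [w] := cross_escape xU.
rewrite in_setD in_setU negb_or => /andP [/andP [wU wA] wW].
set S := W :&: sideU x :|: U :&: W :|: U :&: sideW x.
have cutS : is_cut e S.
  apply: (@sep_cut _ _ S (sideU x :&: sideW x) x w).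
  - by rewrite in_setI !side_self.
  - rewrite disjoints_subset; apply/subsetP => y; rewrite in_setI => /andP [yA yB].
    rewrite in_setC !in_setU !in_setI (negbTE (side_notin yA)).
    by rewrite (negbTE (side_notin yB)) !andbF.
  - move=> y z; rewrite in_setI => /andP [yA yB] yz.
    have zA := side_step yA yz; have zB := side_step yB yz.
    rewrite !in_setU !in_setI.
    case: (boolP (z \in U)) => zU; case: (boolP (z \in W)) => zW.
    + by rewrite /= !orbT.
    + by rewrite (zB zW) /= !orbT.
    + by rewrite (zA zU) /= !orbT.
    + by rewrite (zA zU) (zB zW).
  - by rewrite in_setI (negbTE wA).
  - by rewrite !in_setU !in_setI wW (negbTE wA) (negbTE wU).
apply: leq_trans (kappa_le cutS) _.
apply: leq_trans (leq_card_setU _ _).1 _; rewrite leq_add2r.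
exact: (leq_card_setU _ _).1.
Qed.

Lemma corner_W x : x \notin U -> x \notin W ->
  #|W :\: (U :|: sideU x)| <= #|U :&: sideW x|.
Proof.
move=> xU xW; have := card_split3 W (side_disjoint e U x).
by have := corner_ineq xU xW; rewrite [U :&: W]setIC HWk; lia.
Qed.

Lemma corner_U x : x \notin U -> x \notin W ->
  #|U :\: (W :|: sideW x)| <= #|W :&: sideU x|.
Proof.
move=> xU xW; have := card_split3 U (side_disjoint e W x).
by have := corner_ineq xU xW; rewrite HUk; lia.
Qed.

Lemma U_meets_sideW x :
  x \notin U -> x \notin W -> exists u, u \in U :&: sideW x.
Proof.
move=> xU xW; apply/card_gt0P; apply: leq_trans (corner_W xU xW).
by have [w wD] := cross_escape xU; apply/card_gt0P; exists w.
Qed.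

Hypothesis cutW : is_cut e W.

(* Every side of U meets W; otherwise U would lie in W plus one W-side and
   W could not be a cut. *)
Lemma W_meets_sideU x : x \notin U -> exists w, w \in W :&: sideU x.
Proof.
move=> xU; apply/set0Pn/negP => /eqP noW.
have xW : x \notin W.
  by apply/negP => xW; have := in_set0 x; rewrite -noW in_setI xW side_self.
have UWB : U \subset W :|: sideW x.
  by have := corner_U xU xW; rewrite noW cards0 leqn0 cards_eq0 setD_eq0.
have inUWB z : z \in U -> z \notin W -> z \in sideW x.
  by move=> zU zW; move/subsetP/(_ z zU): UWB; rewrite in_setU (negbTE zW).
suff oneW : forall y, y \notin W -> y \in sideW x.
  by move/negP: (not_cut_one_side esym oneW).
move=> y yW; case: (boolP (y \in U)) => yU; first exact: inUWB.
have [u] := U_meets_sideW yU yW; rewrite in_setI => /andP [uU uy].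
have ux := inUWB u uU (side_notin uy).
by rewrite -(side_eq_common esym uy ux) side_self.
Qed.

Hypothesis three_sides : 3 <= #|sides e U|.

(* Vertices outside U and W in different sides of U share their W-side:
   otherwise, with a vertex of W in a third side of U, the corner
   inequalities give |W \ (U u A)| <= |U n B| <= |U \ (W u B')|
   <= |W n A'| < |W \ (U u A)|. *)
Lemma no_double_split x x' :
  x \notin U -> x \notin W -> x' \notin U -> x' \notin W ->
  sideU x != sideU x' -> sideW x = sideW x'.
Proof.
move=> xU xW x'U x'W AA'; case: (eqVneq (sideW x) (sideW x')) => // BB'.
have [x'' x''U /andP [A''A A''A']] :=
  third_side (sideU x) (sideU x') three_sides.
have [w''] := W_meets_sideU x''U; rewrite in_setI => /andP [w''W w''A''].
have WA'_lt : #|W :&: sideU x'| < #|W :\: (U :|: sideU x)|.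
  apply/proper_card/properP; split.
    by apply: (other_side_sub esym); rewrite eq_sym.
  exists w''; last by rewrite in_setI w''W (side_other esym w''A'' A''A').
  rewrite in_setD in_setU w''W (negbTE (side_notin w''A'')).
  by rewrite (side_other esym w''A'' A''A).
have UB_le : #|U :&: sideW x| <= #|U :\: (W :|: sideW x')|.
  exact/subset_leq_card/(other_side_sub esym).
have := corner_W xU xW; have := corner_U x'U x'W; lia.
Qed.

Hypotheses (cutU : is_cut e U) (U_not_small : ~ small_I e U (kappa e - 1)).

(* All vertices outside U and W lie in a single side of W; otherwise all
   sides of U but one lie inside W, contradicting U not being small. *)
Lemma sideW_const x x' :
  x \notin U -> x \notin W -> x' \notin U -> x' \notin W -> sideW x = sideW x'.
Proof.
move=> xU xW x'U x'W; case: (eqVneq (sideW x) (sideW x')) => // BB'.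
case: (eqVneq (sideU x) (sideU x')) => [AA'|]; last first.
  by move/(no_double_split xU xW x'U x'W)/eqP; rewrite (negbTE BB').
have outW z : z \notin U -> z \notin sideU x -> z \in W.
  move=> zU zA; apply: contraT => zW.
  have zx : sideU z != sideU x by apply: contra zA => /eqP <-; rewrite side_self.
  have zx' : sideU z != sideU x' by rewrite -AA'.
  move: BB'; rewrite -(no_double_split zU zW xU xW zx).
  by rewrite -(no_double_split zU zW x'U x'W zx') eqxx.
have sum_gt := not_small_sum cutU U_not_small (side_in_sides e xU).
have sum_le := other_sides_sum_le esym outW.
have [u] := U_meets_sideW x'U x'W; rewrite in_setI => /andP [uU ux'].
have UB_lt : #|U :&: sideW x| < #|U|.
  apply/proper_card/properP; split; first exact: subsetIl.
  by exists u; rewrite // in_setI uU (side_other esym ux') // eq_sym.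
have := corner_W xU xW; lia.
Qed.

(* Hence W is (I,kappa-1)-small: its other sides lie in U \ (W u B0),
   which misses the vertices of U in B0. *)
Lemma W_small x0 : x0 \notin U -> x0 \notin W -> small_I e W (kappa e - 1).
Proof.
move=> x0U x0W; split=> //; exists (sideW x0); first exact: side_in_sides.
have inU z : z \notin W -> z \notin sideW x0 -> z \in U.
  move=> zW zB; apply: contraT => zU.
  by rewrite -(sideW_const zU zW x0U x0W) side_self in zB.
apply: leq_trans (other_sides_sum_le esym inU) _.
have [u] := U_meets_sideW x0U x0W; rewrite in_setI => /andP [uU ux0].
have : #|U :\: (W :|: sideW x0)| < #|U|.
  apply/proper_card/properP; split; first exact: subsetDl.
  by exists u; rewrite // in_setD in_setU ux0 orbT.
lia.
Qed.
End Crossing.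

Theorem corollary1 (T : finType) (e : rel T)
  (Hsimple : simple_graph e) (Hconn : graph_connected e)
  (Hnc : non_complete e) (Hkappa : 4 * kappa e < #|T|)
  (U : {set T}) (HU : is_cut e U) (HUk : #|U| = kappa e)
  (HUns : ~ small_I e U (kappa e - 1)) (HU3 : 3 <= #|sides e U|)
  (W : {set T}) (HW : is_cut e W) (HWk : #|W| = kappa e) (HWU : W != U) :
  laminar_cut e U W \/ small_I e W (kappa e - 1).
Proof.
have [esym _] := Hsimple.
case: (boolP [exists A in sides e U, W \subset U :|: A]) => [|not_laminar].
  by case/existsP => A /andP [AU WA]; left; split=> //; exists A.
have cross x : x \notin U -> ~~ (W \subset U :|: side_of e U x).
  move=> xU; apply: contra not_laminar => WA.
  by apply/existsP; exists (side_of e U x); rewrite side_in_sides.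
have [x0 [x0U x0W]] : exists x0, x0 \notin U /\ x0 \notin W.
  by apply: outside_two; rewrite HUk HWk; lia.
by right; exact: (W_small esym HUk HWk cross HW HU3 HU HUns x0U x0W).
Qed.
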